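(* Let $\mathcal{G}=(V,L)$ be a finite connected undirected graph with monitor set $M$ and non-monitor set $N=V\setminus M$, $\sigma=|N|$, let $S\subseteq N$ be nonempty and let $q$ be an integer with $0\le q\le\sigma-1$. Then the following are equivalent: (1) for every set $V'\subseteq N$ with $|V'|\le q$, each connected component of $\mathcal{G}-V'$ that contains a node of $S$ contains a monitor; (2) $\Gamma_{\mathcal{G}^*}(S,m')\ge q+1$.
   Context: $\mathcal{G}-V'$ denotes deletion of the nodes of $V'$ and incident links. $\mathcal{N}(M)$ is the set of non-monitors adjacent to at least one monitor. $\mathcal{G}^*$ is obtained from $\mathcal{G}$ by deleting all monitors, adding a virtual node $m'$, and linking $m'$ to every node of $\mathcal{N}(M)$. For nodes $s,t$ of a graph $\mathcal{H}$, $C_{\mathcal{H}}(s,t)$ is a minimum-cardinality set of nodes (other than $s,t$) whose deletion destroys all $s$–$t$ paths; if $s,t$ are adjacent, $C_{\mathcal{H}}(s,t):=V(\mathcal{H})\setminus\{t\}$. $\Gamma_{\mathcal{H}}(S,m):=\min_{w\in S}|C_{\mathcal{H}}(w,m)|$. *)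

From mathcomp Require Import all_boot.
Set Implicit Arguments. Unset Strict Implicit. Unset Printing Implicit Defensive.

(* A graph is given by a finite vertex type, a vertex set A and an adjacency
   relation r; only edges with both ends in A count. *)
Definition rrel (T : finType) (A : {set T}) (r : rel T) : rel T :=
  fun x y => [&& x \in A, y \in A & r x y].

Definition simple_graph (T : finType) (e : rel T) : Prop :=
  symmetric e /\ irreflexive e.
Definition connected_graph (T : finType) (e : rel T) : Prop :=
  forall x y : T, connect e x y.

Definition separates (T : finType) (A : {set T}) (r : rel T) (s t : T)
  (X : {set T}) : bool :=
  ~~ connect (rrel (A :\: X) r) s t.

Definition mincut (T : finType) (A : {set T}) (r : rel T) (s t : T) : nat :=
  if rrel A r s t then #|A :\ t|
  else \big[minn/#|A|]_(X : {set T} | (X \subset A :\ s :\ t) && separates A r s t X) #|X|.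

Definition Gamma (T : finType) (A : {set T}) (r : rel T) (S : {set T}) (m : T) : nat :=
  \big[minn/#|A|]_(w in S) mincut A r w m.

Definition nbM (T : finType) (e : rel T) (M : {set T}) : {set T} :=
  [set v | (v \notin M) && [exists m in M, e v m]].

(* G*: vertices Some v for v non-monitor, plus virtual node m' = None *)
Definition Gstar_V (T : finType) (M : {set T}) : {set option T} :=
  None |: [set Some v | v in ~: M].

Definition Gstar_E (T : finType) (e : rel T) (M : {set T}) : rel (option T) :=
  fun x y => match x, y with
  | Some u, Some v => e u v
  | None, Some v => v \in nbM e M
  | Some u, None => u \in nbM e M
  | None, None => false
  end.

(* Deleting a set V' of non-monitors from G corresponds to deleting its copy
   from G*: a non-monitor s reaches a monitor in G - V' exactly when s reaches
   the virtual node m' in G* - V', since the step of a path into its first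
   monitor starts in N(M) and so becomes an edge to m'.  Conversely every node
   set of G* avoiding s and m' is the copy of such a V'.  Hence the sets of at
   most q non-monitors never cut s off from the monitors iff no set of at most
   q nodes separates s from m' in G*, i.e. iff |C(s, m')| > q. *)
From mathcomp Require Import all_boot.

Lemma connect_invariant {T : finType} {e : rel T} {P : T -> Prop} {x y} :
  connect e x y -> P x -> (forall y z, P y -> e y z -> P z) -> P y.
Proof.
move=> /connectP [p] + -> Px stepP; elim: p x Px => [|z p IHp] x Px //=.
by case/andP=> exz; apply: IHp; apply: stepP exz.
Qed.

Lemma ltn_bigmin (I : finType) (P : pred I) (F : I -> nat) x n :
  n < \big[minn/x]_(i | P i) F i <-> n < x /\ forall i, P i -> n < F i.
Proof.
have bigminE r : (n < \big[minn/x]_(i <- r | P i) F i)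
    = (n < x) && all (fun i => P i ==> (n < F i)) r.
  elim: r => [|i r IHr]; first by rewrite big_nil andbT.
  by rewrite big_cons /=; case: (P i); rewrite ?leq_min IHr // andbCA.
rewrite bigminE; split=> [/andP [-> /allP FP] | [-> FP]].
  by split=> // i Pi; apply: implyP Pi; apply: FP; rewrite mem_index_enum.
by apply/allP=> i _; apply/implyP/FP.
Qed.

Lemma Gamma_gt {T : finType} {A : {set T}} {r : rel T} {S : {set T}} {m n} :
  n < #|A| ->
  n < Gamma A r S m <-> forall w, w \in S -> n < mincut A r w m.
Proof. by move=> nA; split=> [/ltn_bigmin [] | FP]; last apply/ltn_bigmin. Qed.

Lemma mincut_gt_nonadj {T : finType} {A : {set T}} {r : rel T} {s t n} :
  ~~ rrel A r s t -> n < #|A| ->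
  n < mincut A r s t <->
  forall X : {set T}, X \subset A :\ s :\ t -> #|X| <= n -> ~~ separates A r s t X.
Proof.
move=> /negbTE nadj nA; rewrite /mincut nadj.
split=> [/ltn_bigmin [_ cutP] X sX | cutP].
  by apply: contraTN => sepX; rewrite -ltnNge cutP ?sX.
apply/ltn_bigmin; split=> // X /andP [sX sepX].
by rewrite ltnNge; apply: contraL sepX; apply: cutP.
Qed.

Lemma imset_Some_preimset {T : finType} {X : {set option T}} :
  None \notin X -> Some @: (Some @^-1: X) = X.
Proof.
move=> NX; apply/setP=> [[v|]]; last by rewrite (negbTE NX); apply/imsetP=> -[].
by rewrite mem_imset ?inE //; apply: Some_inj.
Qed.

Section Gstar.

Variables (T : finType) (e : rel T) (M : {set T}).

Lemma mem_Gstar_V_Some v : (Some v \in Gstar_V M) = (v \notin M).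
Proof. by rewrite in_setU1 /= mem_imset ?inE //; apply: Some_inj. Qed.

Lemma mem_Gstar_V_None : None \in Gstar_V M.
Proof. exact: setU11. Qed.

Lemma card_Gstar_V_None : #|Gstar_V M :\ None| = #|~: M|.
Proof.
rewrite setU1K ?card_imset //; first exact: Some_inj.
by apply/imsetP=> -[].
Qed.

Lemma card_Gstar_V : #|Gstar_V M| = #|~: M|.+1.
Proof. by rewrite (cardsD1 None) mem_Gstar_V_None card_Gstar_V_None. Qed.

Section Deletion.

Variable V' : {set T}.
Hypothesis V'_nonmonitor : V' \subset ~: M.

Let A := Gstar_V M :\: Some @: V'.

Lemma mem_Gstar_del_Some v : (Some v \in A) = (v \notin M) && (v \notin V').
Proof.
by rewrite in_setD mem_Gstar_V_Some andbC mem_imset //; apply: Some_inj.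
Qed.

Lemma mem_Gstar_del_None : None \in A.
Proof. by rewrite in_setD mem_Gstar_V_None andbT; apply/imsetP=> -[]. Qed.

Lemma monitor_notin_del m : m \in M -> m \notin V'.
Proof. by move=> mM; apply: contraL mM => /(subsetP V'_nonmonitor); rewrite inE. Qed.

Lemma connect_Gstar_del s : s \notin M ->
  connect (rrel A (Gstar_E e M)) (Some s) None <->
  exists2 m, m \in M & connect (rrel (~: V') e) s m.
Proof.
move=> sM; split=> [cG | [m mM cG]].
- pose P y := (exists2 m, m \in M & connect (rrel (~: V') e) s m)
      \/ exists2 u, y = Some u & connect (rrel (~: V') e) s u.
  suff [//|[]//] : P None by [].
  apply: (connect_invariant cG); first by right; exists s.
  move=> y z [|[u -> csu]]; [by left | case/and3P].
  rewrite mem_Gstar_del_Some => /andP [_ uV'].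
  case: z => [v|] /=.
    rewrite mem_Gstar_del_Some => /andP [_ vV'] euv; right; exists v => //.
    by apply: connect_trans csu (connect1 _); rewrite /rrel !inE uV' vV'.
  move=> _; rewrite inE => /andP [_ /existsP [m /andP [mM eum]]].
  left; exists m => //; apply: connect_trans csu (connect1 _).
  by rewrite /rrel !inE uV' monitor_notin_del.
- pose P y := connect (rrel A (Gstar_E e M)) (Some s) None
      \/ y \notin M /\ connect (rrel A (Gstar_E e M)) (Some s) (Some y).
  suff [//|[]] : P m by rewrite mM.
  apply: (connect_invariant cG); first by right.
  move=> y z [|[yM csy]]; [by left | case/and3P].
  rewrite !inE => yV' zV' eyz.
  have yA : Some y \in A by rewrite mem_Gstar_del_Some yM.
  case: (boolP (z \in M)) => zM.
    left; apply: connect_trans csy (connect1 _).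
    rewrite /rrel yA mem_Gstar_del_None /= inE yM.
    by apply/existsP; exists z; rewrite zM.
  right; split=> //; apply: connect_trans csy (connect1 _).
  by rewrite /rrel yA mem_Gstar_del_Some zM zV'.
Qed.

End Deletion.

Lemma mincut_Gstar_gt s q : s \notin M -> q < #|~: M| ->
  q < mincut (Gstar_V M) (Gstar_E e M) (Some s) None <->
  forall V' : {set T}, V' \subset ~: M -> #|V'| <= q -> s \notin V' ->
    exists2 m, m \in M & connect (rrel (~: V') e) s m.
Proof.
move=> sM qM.
have qA : q < #|Gstar_V M| by rewrite card_Gstar_V ltnW.
have [adj|nadj] := boolP (rrel (Gstar_V M) (Gstar_E e M) (Some s) None).
  rewrite /mincut adj card_Gstar_V_None; split=> // _ V' V'M _ sV'.
  apply/(connect_Gstar_del V' V'M s sM)/connect1; case/and3P: adj => _ _ adj.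
  by rewrite /rrel mem_Gstar_del_Some sM sV' mem_Gstar_del_None.
split=> [/(mincut_gt_nonadj nadj qA) cutP V' V'M cV' sV' | reachP].
  apply/(connect_Gstar_del V' V'M s sM)/negPn/cutP => //; last first.
    by rewrite card_imset //; apply: Some_inj.
  apply/subsetP=> _ /imsetP [v vV' ->].
  rewrite !in_setD1 mem_Gstar_V_Some -in_setC (subsetP V'M _ vV') andbT.
  by apply: contraNneq sV' => -[<-].
apply/(mincut_gt_nonadj nadj qA) => X sX cX.
have NX : None \notin X by apply/negP => /(subsetP sX); rewrite in_setD1 eqxx.
set V' := Some @^-1: X; rewrite -(imset_Some_preimset NX).
have V'M : V' \subset ~: M.
  apply/subsetP=> v; rewrite inE => /(subsetP sX) /setD1P [_ /setD1P [_]].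
  by rewrite mem_Gstar_V_Some inE.
apply/negPn/(connect_Gstar_del V' V'M s sM)/reachP => //.
- by rewrite -(card_imset _ Some_inj) imset_Some_preimset.
- by rewrite inE; apply/negP => /(subsetP sX); rewrite !in_setD1 eqxx andbF.
Qed.

End Gstar.

Theorem lemma4 (T : finType) (e : rel T) (M S : {set T}) (q : nat) :
  simple_graph e -> connected_graph e ->
  S \subset ~: M -> S != set0 ->
  q <= #|~: M| - 1 ->
  ((forall V' : {set T}, V' \subset ~: M -> #|V'| <= q ->
      forall s, s \in S -> s \notin V' ->
        exists2 m, m \in M & connect (rrel (~: V') e) s m)
   <->
   q.+1 <= Gamma (Gstar_V M) (Gstar_E e M) [set Some w | w in S] None).
Proof.
move=> _ _ SM /set0Pn [s0 s0S] hq.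
have SnM s : s \in S -> s \notin M by move/(subsetP SM); rewrite inE.
have qM : q < #|~: M|.
  have : 0 < #|~: M| by apply/card_gt0P; exists s0; rewrite inE SnM.
  by case: #|~: M| hq => // n; rewrite subn1.
have qA : q < #|Gstar_V M| by rewrite card_Gstar_V ltnW.
split=> [reachP | /(Gamma_gt qA) cutP V' V'M cV' s sS sV'].
  apply/(Gamma_gt qA) => _ /imsetP [s sS ->].
  by apply/mincut_Gstar_gt; rewrite ?SnM // => V' V'M cV'; apply: reachP.
by move/mincut_Gstar_gt: (cutP _ (imset_f _ sS)); apply; rewrite ?SnM.
Qed.
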